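(* Let $a_1,\dots,a_N\ge0$, let $b_1,\dots,b_N>0$ be pairwise distinct, $a=\sum_ja_j$, and $K(t)=\sum_{j=1}^Na_jK_j(t)$ with $K_j(t)=\sum_{i=1}^jb_i\psi_i^je^{-b_it}$, $\psi_i^j=\prod_{k=1,k\neq i}^j\frac{b_k}{b_k-b_i}$. Let $u$ solve $\dot u(t)=-au(t)+\int_0^tK(t-s)u(s)\,ds$, $u(0)=u_0$. Then $u(t)\to u_0/Z$ as $t\to\infty$, where $Z=1+\sum_{i=1}^N\frac1{b_i}\sum_{j=i}^Na_j$. *)

From Stdlib Require Import Reals Lra.
Open Scope R_scope.

(* sumR f n = f 1 + ... + f n  (1-based, n terms) *)
Fixpoint sumR (f : nat -> R) (n : nat) : R :=
  match n with O => 0 | S m => sumR f m + f (S m) end.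

Fixpoint prodR (f : nat -> R) (n : nat) : R :=
  match n with O => 1 | S m => prodR f m * f (S m) end.

Definition psi (b : nat -> R) (i j : nat) : R :=
  prodR (fun k => if Nat.eqb k i then 1 else b k / (b k - b i)) j.

Definition Kj (b : nat -> R) (j : nat) (t : R) : R :=
  sumR (fun i => b i * psi b i j * exp (- b i * t)) j.

Definition Kker (N : nat) (a b : nat -> R) (t : R) : R :=
  sumR (fun j => a j * Kj b j t) N.

Definition Zconst (N : nat) (a b : nat -> R) : R :=
  1 + sumR (fun i => / b i * sumR (fun j => if Nat.leb i j then a j else 0) N) N.

From Stdlib Require Import Reals Lra Lia.
From Coquelicot Require Import Coquelicot.
Open Scope R_scope.

(* [K_j] is the density of a sum of independent exponential times of rates
   [b_1, ..., b_j].  Hence the memory terms [x_j = K_j * u] obey the linear chain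
   [x_j' = b_j (x_{j-1} - x_j)] with [x_0 = u], and the equation becomes the linear
   system [u' = sum_j a_j (x_j - u)].  With [c_k = a_k + ... + a_N], this system conserves
   [u + sum_k (c_k / b_k) x_k], which equals [u0] at [t = 0]; the only constant state with
   that mass is [L = u0 / Z].  The energy [(u - L)^2 + sum_k (c_k / b_k) (x_k - L)^2]
   decreases at the rate [D = sum_j a_j (x_j - u)^2 + sum_k c_k (x_{k-1} - x_k)^2], and
   conservation of mass together with a discrete Poincaré inequality bounds the energy by
   a constant times [D], which forces it to 0. *)

(** * Finite sums *)

Lemma sumR_ext n f g :
  (forall k, (1 <= k <= n)%nat -> f k = g k) -> sumR f n = sumR g n.
Proof.
  induction n; simpl; intros H; auto.
  rewrite IHn by (intros; apply H; lia). rewrite H by lia. reflexivity.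
Qed.

Lemma prodR_ext n f g :
  (forall k, (1 <= k <= n)%nat -> f k = g k) -> prodR f n = prodR g n.
Proof.
  induction n; simpl; intros H; auto.
  rewrite IHn by (intros; apply H; lia). rewrite H by lia. reflexivity.
Qed.

Lemma sumR_0 n : sumR (fun _ => 0) n = 0.
Proof. induction n; simpl; lra. Qed.

Lemma sumR_plus n f g : sumR (fun k => f k + g k) n = sumR f n + sumR g n.
Proof. induction n; simpl; lra. Qed.

Lemma sumR_minus n f g : sumR (fun k => f k - g k) n = sumR f n - sumR g n.
Proof. induction n; simpl; lra. Qed.

Lemma sumR_scal n c f : sumR (fun k => c * f k) n = c * sumR f n.
Proof. induction n; simpl; lra. Qed.

Lemma sumR_scal_r n c f : sumR (fun k => f k * c) n = sumR f n * c.
Proof. induction n; simpl; lra. Qed.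

Lemma sumR_S f n : sumR f (S n) = sumR f n + f (S n).
Proof. reflexivity. Qed.

Lemma sumR_le n f g :
  (forall k, (1 <= k <= n)%nat -> f k <= g k) -> sumR f n <= sumR g n.
Proof.
  induction n; simpl; intros H; [lra|].
  assert (sumR f n <= sumR g n) by (apply IHn; intros; apply H; lia).
  assert (f (S n) <= g (S n)) by (apply H; lia).
  lra.
Qed.

Lemma sumR_nonneg n f : (forall k, (1 <= k <= n)%nat -> 0 <= f k) -> 0 <= sumR f n.
Proof. intros H. rewrite <- (sumR_0 n). now apply sumR_le. Qed.

Lemma sumR_le_prefix f k n :
  (k <= n)%nat -> (forall m, (1 <= m <= n)%nat -> 0 <= f m) -> sumR f k <= sumR f n.
Proof.
  intros Hkn Hf. induction Hkn; simpl; [lra|].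
  assert (0 <= f (S m)) by (apply Hf; lia).
  assert (sumR f k <= sumR f m) by (apply IHHkn; intros; apply Hf; lia).
  lra.
Qed.

Lemma sumR_exchange n m F :
  sumR (fun k => sumR (fun j => F k j) m) n = sumR (fun j => sumR (fun k => F k j) n) m.
Proof.
  induction n; simpl.
  - now rewrite sumR_0.
  - now rewrite IHn, <- sumR_plus.
Qed.

Lemma sumR_prefix n j f :
  (j <= n)%nat -> sumR (fun k => if Nat.leb k j then f k else 0) n = sumR f j.
Proof.
  intros Hjn. induction Hjn.
  - destruct j as [|j]; [reflexivity|].
    cbn [sumR]. rewrite Nat.leb_refl. f_equal. apply sumR_ext. intros k Hk.
    replace (Nat.leb k (S j)) with true; auto. symmetry. apply Nat.leb_le. lia.
  - cbn [sumR]. rewrite IHHjn. replace (Nat.leb (S m) j) with false; [lra|].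
    symmetry. apply Nat.leb_gt. lia.
Qed.

Lemma sumR_telescope n (y : nat -> R) :
  sumR (fun k => y (k - 1)%nat - y k) n = y 0%nat - y n.
Proof. induction n; simpl; [lra|]. rewrite IHn, Nat.sub_0_r. lra. Qed.

Lemma sumR_sqr_le n (d : nat -> R) :
  sumR d n * sumR d n <= INR n * sumR (fun m => d m * d m) n.
Proof.
  induction n; cbn [sumR]; [simpl; lra|].
  rewrite S_INR.
  destruct (Nat.eq_dec n 0) as [->|Hn]; [simpl; nra|].
  assert (Hn' : 0 < INR n) by (apply lt_0_INR; lia).
  set (s := sumR d n) in *. set (q := sumR (fun m => d m * d m) n) in *.
  assert (0 <= (s - INR n * d (S n)) * (s - INR n * d (S n))) by apply Rle_0_sqr.
  assert (2 * s * d (S n) <= q + INR n * d (S n) * d (S n)).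
  { apply Rmult_le_reg_l with (INR n); nra. }
  nra.
Qed.

(** [c_k = a_k + ... + a_N], the coefficient of [1/b_k] in [Zconst]. *)
Definition tail_sum (N : nat) (a : nat -> R) (k : nat) : R :=
  sumR (fun j => if Nat.leb k j then a j else 0) N.

Section TailSum.

Variables (N : nat) (a : nat -> R).
Hypothesis a_nonneg : forall j, (1 <= j <= N)%nat -> 0 <= a j.

Lemma tail_sum_nonneg k : 0 <= tail_sum N a k.
Proof.
  apply sumR_nonneg. intros j Hj. destruct (Nat.leb k j); auto; lra.
Qed.

Lemma tail_sum_antimono m k : (m <= k)%nat -> tail_sum N a k <= tail_sum N a m.
Proof.
  intros Hmk. apply sumR_le. intros j Hj.
  destruct (Nat.leb k j) eqn:Ek, (Nat.leb m j) eqn:Em; auto; try lra.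
  apply Nat.leb_le in Ek. apply Nat.leb_gt in Em. lia.
Qed.

Lemma tail_sum_sqr_telescope_le (y : nat -> R) k :
  (k <= N)%nat ->
  tail_sum N a k * ((y k - y 0%nat) * (y k - y 0%nat))
  <= INR N * sumR (fun m => tail_sum N a m * ((y (m - 1)%nat - y m) * (y (m - 1)%nat - y m))) N.
Proof.
  intros HkN. set (d := fun m => y (m - 1)%nat - y m).
  assert (Hdk : y k - y 0%nat = - sumR d k) by (unfold d; rewrite sumR_telescope; ring).
  assert (Hterm : forall m, 0 <= tail_sum N a m * (d m * d m))
    by (intros; apply Rmult_le_pos; [apply tail_sum_nonneg | apply Rle_0_sqr]).
  rewrite Hdk. replace (- sumR d k * - sumR d k) with (sumR d k * sumR d k) by ring.
  apply Rle_trans with (tail_sum N a k * (INR k * sumR (fun m => d m * d m) k)).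
  { apply Rmult_le_compat_l; [apply tail_sum_nonneg | apply sumR_sqr_le]. }
  apply Rle_trans with (INR k * sumR (fun m => tail_sum N a m * (d m * d m)) k).
  { replace (tail_sum N a k * (INR k * sumR (fun m => d m * d m) k))
      with (INR k * sumR (fun m => tail_sum N a k * (d m * d m)) k) by (rewrite sumR_scal; ring).
    apply Rmult_le_compat_l; [apply pos_INR|].
    apply sumR_le. intros m Hm.
    apply Rmult_le_compat_r; [apply Rle_0_sqr | apply tail_sum_antimono; lia]. }
  apply Rmult_le_compat.
  - apply pos_INR.
  - now apply sumR_nonneg.
  - now apply le_INR.
  - apply sumR_le_prefix; auto.
Qed.

End TailSum.

Lemma sumR_tail_sum_by_parts N a (y : nat -> R) :
  sumR (fun k => tail_sum N a k * (y (k - 1)%nat - y k)) N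
  = sumR (fun j => a j * (y 0%nat - y j)) N.
Proof.
  unfold tail_sum.
  rewrite (sumR_ext N _ (fun k => sumR (fun j =>
             (if Nat.leb k j then a j else 0) * (y (k - 1)%nat - y k)) N))
    by (intros; symmetry; apply sumR_scal_r).
  rewrite sumR_exchange. apply sumR_ext. intros j Hj.
  rewrite <- sumR_telescope, <- (sumR_prefix N j) by lia.
  rewrite <- sumR_scal. apply sumR_ext. intros k _.
  destruct (Nat.leb k j); lra.
Qed.

(** * The kernels [K_j] *)

Definition pairwise_distinct (b : nat -> R) (n : nat) : Prop :=
  forall i k, (1 <= i <= n)%nat -> (1 <= k <= n)%nat -> i <> k -> b i <> b k.

Lemma pairwise_distinct_le b m n : (m <= n)%nat -> pairwise_distinct b n -> pairwise_distinct b m.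
Proof. intros Hmn Hd i k Hi Hk. apply Hd; lia. Qed.

Lemma psi_S b i k :
  (i <= k)%nat -> psi b i (S k) = psi b i k * (b (S k) / (b (S k) - b i)).
Proof.
  intros Hik. unfold psi. cbn [prodR].
  destruct (Nat.eqb (S k) i) eqn:E; auto. apply Nat.eqb_eq in E. lia.
Qed.

Lemma psi_diag b k : psi b (S k) (S k) = prodR (fun m => b m / (b m + - b (S k))) k.
Proof.
  unfold psi. cbn [prodR]. rewrite Nat.eqb_refl, Rmult_1_r.
  apply prodR_ext. intros m Hm.
  destruct (Nat.eqb m (S k)) eqn:E; [apply Nat.eqb_eq in E; lia|].
  f_equal; lra.
Qed.

(** Both sides are the Laplace transform of [K_k] at [z]. *)
Lemma psi_partial_fractions b k z :
  (1 <= k)%nat -> pairwise_distinct b k ->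
  (forall m, (1 <= m <= k)%nat -> b m + z <> 0) ->
  sumR (fun i => psi b i k * b i / (b i + z)) k = prodR (fun m => b m / (b m + z)) k.
Proof.
  revert z. induction k as [|k IH]; intros z Hk Hd Hz; [lia|].
  destruct (Nat.eq_dec k 0) as [->|Hk0].
  - unfold psi. simpl. field. apply Hz. lia.
  - set (B := b (S k)).
    assert (HB : forall i, (1 <= i <= k)%nat -> b i - B <> 0).
    { intros i Hi E. apply (Hd i (S k)); try lia. unfold B in E. lra. }
    assert (HBz : B + z <> 0) by (apply Hz; lia).
    cbn [sumR prodR]. rewrite psi_diag. fold B.
    rewrite (sumR_ext k _ (fun i => B / (B + z) *
               (psi b i k * b i / (b i + z) - psi b i k * b i / (b i + - B)))).
    2:{ intros i Hi. rewrite psi_S by lia. fold B.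
        assert (b i + z <> 0) by (apply Hz; lia).
        specialize (HB i Hi). field. repeat split; auto; lra. }
    rewrite sumR_scal, sumR_minus.
    assert (Hd' : pairwise_distinct b k) by (apply (pairwise_distinct_le b k (S k)); auto).
    rewrite !IH; auto; try lia.
    + now field.
    + intros m Hm. apply Hz. lia.
Qed.

(** [K_{k+1}(0) = 0] for [k >= 1]. *)
Lemma sumR_b_psi_0 b k :
  (1 <= k)%nat -> pairwise_distinct b (S k) -> sumR (fun i => b i * psi b i (S k)) (S k) = 0.
Proof.
  intros Hk Hd. set (B := b (S k)).
  assert (HB : forall i, (1 <= i <= k)%nat -> b i + - B <> 0).
  { intros i Hi E. apply (Hd i (S k)); try lia. unfold B in E. lra. }
  cbn [sumR]. rewrite psi_diag. fold B.
  rewrite (sumR_ext k _ (fun i => - B * (psi b i k * b i / (b i + - B)))).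
  2:{ intros i Hi. rewrite psi_S by lia. fold B. specialize (HB i Hi). field. lra. }
  rewrite sumR_scal, psi_partial_fractions; auto.
  - lra.
  - apply (pairwise_distinct_le b k (S k)); auto.
Qed.

(** * The linear chain *)

Lemma derivable_pt_lim_sumR n (F : nat -> R -> R) F' t :
  (forall k, (1 <= k <= n)%nat -> derivable_pt_lim (F k) t (F' k)) ->
  derivable_pt_lim (fun t => sumR (fun k => F k t) n) t (sumR F' n).
Proof.
  induction n; intros H; simpl.
  - apply derivable_pt_lim_const.
  - apply (derivable_pt_lim_plus (fun t => sumR (fun k => F k t) n) (F (S n))).
    + apply IHn. intros; apply H; lia.
    + apply H; lia.
Qed.

Lemma continuity_pt_sumR n (F : nat -> R -> R) t :
  (forall k, (1 <= k <= n)%nat -> continuity_pt (F k) t) ->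
  continuity_pt (fun t => sumR (fun k => F k t) n) t.
Proof.
  induction n; intros H; simpl.
  - apply continuity_pt_const. now intros ??.
  - apply (continuity_pt_plus (fun t => sumR (fun k => F k t) n) (F (S n))).
    + apply IHn. intros; apply H; lia.
    + apply H; lia.
Qed.

Lemma ex_RInt_continuity (g : R -> R) x y : (forall s, continuity_pt g s) -> ex_RInt g x y.
Proof.
  intros H. apply (@ex_RInt_continuous R_CompleteNormedModule).
  intros z _. now apply continuity_pt_filterlim.
Qed.

Lemma RInt_sumR n (F : nat -> R -> R) x y :
  (forall k, (1 <= k <= n)%nat -> forall s, continuity_pt (F k) s) ->
  RInt (fun s => sumR (fun k => F k s) n) x y = sumR (fun k => RInt (F k) x y) n.
Proof.
  induction n; intros H; simpl.
  - rewrite (@RInt_const R_CompleteNormedModule). apply (@scal_zero_r R_Ring).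
  - rewrite <- IHn by (intros; apply H; lia).
    apply (@RInt_plus R_CompleteNormedModule); apply ex_RInt_continuity.
    + intros s. apply continuity_pt_sumR. intros k Hk. apply H. lia.
    + apply H. lia.
Qed.

Lemma RInt_scal_R (g : R -> R) c x y :
  ex_RInt g x y -> RInt (fun s => c * g s) x y = c * RInt g x y.
Proof. exact (@RInt_scal R_CompleteNormedModule g x y c). Qed.

Lemma continuity_pt_exp_mult (f : R -> R) c s :
  continuity_pt f s -> continuity_pt (fun s => exp (c * s) * f s) s.
Proof.
  intros Hf. apply continuity_pt_mult; auto.
  apply (continuity_pt_comp (fun s => c * s) exp).
  - apply continuity_pt_mult; [apply continuity_pt_const; now intros ?? | apply continuity_pt_id].
  - apply derivable_continuous_pt, derivable_pt_exp.
Qed.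

Definition exp_conv (b : nat -> R) (f : R -> R) (i : nat) (t : R) : R :=
  exp (- b i * t) * RInt (fun s => exp (b i * s) * f s) 0 t.

(** [chain b f k = K_k * f] for [k >= 1], and [chain b f 0 = f]. *)
Definition chain (b : nat -> R) (f : R -> R) (k : nat) (t : R) : R :=
  match k with
  | O => f t
  | _ => sumR (fun i => b i * psi b i k * exp_conv b f i t) k
  end.

Section LinearChain.

Variables (b : nat -> R) (f : R -> R).
Hypothesis f_cont : forall s, continuity_pt f s.

Lemma derive_exp_conv i t : derivable_pt_lim (exp_conv b f i) t (f t - b i * exp_conv b f i t).
Proof.
  set (g := fun s => exp (b i * s) * f s).
  assert (Hg : forall s, continuity_pt g s) by (intros; now apply continuity_pt_exp_mult).
  assert (HG : derivable_pt_lim (fun t => RInt g 0 t) t (g t)).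
  { apply is_derive_Reals.
    apply (@is_derive_RInt R_NormedModule g (fun t => RInt g 0 t) 0 t).
    - apply filter_forall. intros y.
      apply (@RInt_correct R_CompleteNormedModule), ex_RInt_continuity, Hg.
    - now apply continuity_pt_filterlim. }
  assert (He : derivable_pt_lim (fun t => exp (- b i * t)) t (exp (- b i * t) * - b i)).
  { apply is_derive_Reals. auto_derive; auto. lra. }
  unfold exp_conv. change (fun s => exp (b i * s) * f s) with g.
  replace (f t - b i * (exp (- b i * t) * RInt g 0 t))
    with (exp (- b i * t) * - b i * RInt g 0 t + exp (- b i * t) * g t).
  - exact (derivable_pt_lim_mult _ _ t _ _ He HG).
  - unfold g. rewrite <- Rmult_assoc, <- exp_plus.
    replace (- b i * t + b i * t) with 0 by ring. rewrite exp_0. ring.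
Qed.

Lemma chain_S_0 k : chain b f (S k) 0 = 0.
Proof.
  unfold chain. transitivity (sumR (fun _ => 0) (S k)); [|apply sumR_0].
  apply sumR_ext. intros i _.
  unfold exp_conv. rewrite RInt_point. unfold zero; simpl. ring.
Qed.

(** The linear chain trick: differentiating [K_{k+1} * f] produces [K_k * f]. *)
Lemma derive_chain_S k t :
  pairwise_distinct b (S k) ->
  derivable_pt_lim (chain b f (S k)) t (b (S k) * (chain b f k t - chain b f (S k) t)).
Proof.
  intros Hd.
  set (J := fun i => exp_conv b f i t).
  assert (H : derivable_pt_lim (chain b f (S k)) t
                (sumR (fun i => b i * psi b i (S k) * (f t - b i * J i)) (S k))).
  { apply derivable_pt_lim_sumR. intros i _.
    apply derivable_pt_lim_scal, derive_exp_conv. }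
  match goal with |- derivable_pt_lim _ _ ?l => replace l with
    (sumR (fun i => b i * psi b i (S k) * (f t - b i * J i)) (S k)); [exact H|] end.
  destruct k as [|k].
  - cbn [chain sumR]. unfold J, psi. simpl. ring.
  - set (B := b (S (S k))).
    assert (HB : forall i, (1 <= i <= S k)%nat -> B - b i <> 0).
    { intros i Hi E. apply (Hd (S (S k)) i); try lia. unfold B in E. lra. }
    rewrite (sumR_ext (S (S k)) _ (fun i => f t * (b i * psi b i (S (S k)))
                                     - b i * b i * psi b i (S (S k)) * J i)) by (intros; ring).
    rewrite sumR_minus, sumR_scal, sumR_b_psi_0, Rmult_0_r by (auto; lia).
    cbn [chain]. rewrite 2!(sumR_S _ (S k)). fold B.
    rewrite (sumR_ext (S k) _ (fun i => - B * (b i * psi b i (S k) * J i)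
                                       + B * (b i * psi b i (S (S k)) * J i))).
    2:{ intros i Hi. specialize (HB i Hi). rewrite psi_S by lia. fold B. field. auto. }
    rewrite sumR_plus, !sumR_scal. unfold J. ring.
Qed.

End LinearChain.

(** * The Lyapunov argument *)

Lemma derivable_pt_lim_sqr_shift f t l L :
  derivable_pt_lim f t l ->
  derivable_pt_lim (fun t => (f t - L) * (f t - L)) t (2 * (f t - L) * l).
Proof.
  intros H.
  assert (H1 : derivable_pt_lim (fun t => f t - L) t (l - 0)).
  { apply (derivable_pt_lim_minus f (fun _ => L)); auto. apply derivable_pt_lim_const. }
  replace (2 * (f t - L) * l) with ((l - 0) * (f t - L) + (f t - L) * (l - 0)) by ring.
  exact (derivable_pt_lim_mult _ _ t _ _ H1 H1).
Qed.

Lemma nonincreasing_of_derive (V D : R -> R) s t :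
  (forall c, 0 < c -> derivable_pt_lim V c (- D c)) -> (forall c, 0 < c -> 0 <= D c) ->
  0 < s <= t -> V t <= V s.
Proof.
  intros HV HD [Hs Hst]. destruct (Req_dec s t) as [->|Hne]; [lra|].
  destruct (MVT_cor2 V (fun c => - D c) s t) as [c [Hc Hc2]]; [lra| |].
  - intros c Hc. apply HV. lra.
  - assert (0 <= D c) by (apply HD; lra). nra.
Qed.

Lemma derive_0_const (P : R -> R) t :
  continuity_pt P 0 -> (forall c, 0 < c -> derivable_pt_lim P c 0) -> 0 < t -> P t = P 0.
Proof.
  intros HP0 HP Ht.
  assert (Hmid : forall s, 0 < s <= t -> P t = P s).
  { intros s Hs. destruct (Req_dec s t) as [->|Hne]; auto.
    destruct (MVT_cor2 P (fun _ => 0) s t) as [c [Hc _]]; [lra| |lra].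
    intros c Hc. apply HP. lra. }
  destruct (Req_dec (P t) (P 0)) as [E|Hne]; auto. exfalso.
  set (e := Rabs (P t - P 0)). assert (He : 0 < e) by (apply Rabs_pos_lt; lra).
  destruct (HP0 e He) as [alp [Halp Hal]]. simpl in Hal. unfold R_dist in Hal.
  set (s := Rmin (alp / 2) t).
  assert (Hs : 0 < s <= t) by (split; [apply Rmin_pos|apply Rmin_r]; lra).
  assert (Hsa : s <= alp / 2) by apply Rmin_l.
  assert (Hl : Rabs (P s - P 0) < e).
  { apply Hal. split; [split; [constructor|lra]|]. rewrite Rminus_0_r, Rabs_pos_eq; lra. }
  rewrite <- (Hmid s Hs) in Hl. unfold e in Hl. lra.
Qed.

Lemma lyapunov_vanishes (V D : R -> R) (C : R) :
  0 < C ->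
  (forall t, 0 < t -> derivable_pt_lim V t (- D t)) -> (forall t, 0 < t -> 0 <= D t) ->
  (forall t, 0 < t -> 0 <= V t) -> (forall t, 0 < t -> V t <= C * D t) ->
  forall e, 0 < e -> exists T, 0 < T /\ forall t, T <= t -> V t < e.
Proof.
  intros HC HV HD HV0 HVD e He.
  assert (HV1 : 0 <= V 1) by (apply HV0; lra).
  set (T := 2 + C * V 1 / e).
  assert (HT : 2 <= T) by (assert (0 <= C * V 1 / e) by
    (apply Rmult_le_pos; [nra | left; apply Rinv_0_lt_compat; auto]); unfold T; lra).
  (* If [V T >= e], then [D >= V / C >= e / C] on [[1, T]], so [V] would have dropped
     by more than [V 1] between [1] and [T]. *)
  assert (HVT : V T < e).
  { apply Rnot_le_lt. intros HeV.
    destruct (MVT_cor2 V (fun c => - D c) 1 T) as [c [Hc Hc2]]; [lra| |].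
    - intros c Hc. apply HV. lra.
    - assert (V T <= V c) by (apply (nonincreasing_of_derive V D); auto; lra).
      assert (V c <= C * D c) by (apply HVD; lra).
      assert (0 <= V T) by (apply HV0; lra).
      assert (Hlen : e / C * (T - 1) = e / C + V 1) by (unfold T; field; lra).
      assert (e / C <= D c) by (apply Rmult_le_reg_l with C; auto; field_simplify; lra).
      assert (0 < e / C) by (apply Rdiv_lt_0_compat; auto).
      nra. }
  exists T. split; [lra|]. intros t Ht.
  apply Rle_lt_trans with (V T); auto. apply (nonincreasing_of_derive V D); auto. lra.
Qed.

Section LinearSystem.

Variables (N : nat) (a b : nat -> R) (x : nat -> R -> R) (u0 : R).
Hypothesis a_nonneg : forall j, (1 <= j <= N)%nat -> 0 <= a j.
Hypothesis b_pos : forall i, (1 <= i <= N)%nat -> 0 < b i.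
Hypothesis x_0_init : x 0%nat 0 = u0.
Hypothesis x_S_init : forall k, (1 <= k <= N)%nat -> x k 0 = 0.
Hypothesis x_cont_0 : forall k, (k <= N)%nat -> continuity_pt (x k) 0.
Hypothesis derive_x_0 : forall t, 0 < t ->
  derivable_pt_lim (x 0%nat) t (sumR (fun j => a j * (x j t - x 0%nat t)) N).
Hypothesis derive_x_S : forall t, 0 < t -> forall k, (1 <= k <= N)%nat ->
  derivable_pt_lim (x k) t (b k * (x (k - 1)%nat t - x k t)).

Definition weight (k : nat) : R := / b k * tail_sum N a k.

Definition mass (t : R) : R := x 0%nat t + sumR (fun k => weight k * x k t) N.

Definition energy (L t : R) : R :=
  (x 0%nat t - L) * (x 0%nat t - L) + sumR (fun k => weight k * ((x k t - L) * (x k t - L))) N.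

Definition dissipation (t : R) : R :=
  sumR (fun j => a j * ((x j t - x 0%nat t) * (x j t - x 0%nat t))) N +
  sumR (fun k => tail_sum N a k * ((x (k - 1)%nat t - x k t) * (x (k - 1)%nat t - x k t))) N.

Lemma weight_nonneg k : (1 <= k <= N)%nat -> 0 <= weight k.
Proof.
  intros Hk. apply Rmult_le_pos; [left; apply Rinv_0_lt_compat; auto | now apply tail_sum_nonneg].
Qed.

Lemma weight_mul_b k : (1 <= k <= N)%nat -> weight k * b k = tail_sum N a k.
Proof. intros Hk. unfold weight. assert (0 < b k) by auto. field. lra. Qed.

Lemma derive_mass t : 0 < t -> derivable_pt_lim mass t 0.
Proof.
  intros Ht.
  assert (H := derivable_pt_lim_plus _ _ t _ _ (derive_x_0 t Ht)
    (derivable_pt_lim_sumR N (fun k t => weight k * x k t)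
       (fun k => weight k * (b k * (x (k - 1)%nat t - x k t))) t
       (fun k Hk => derivable_pt_lim_scal _ _ _ _ (derive_x_S t Ht k Hk)))).
  match goal with _ : derivable_pt_lim _ _ ?l |- _ => replace 0 with l; [exact H|] end.
  rewrite (sumR_ext N (fun k => weight k * _)
             (fun k => tail_sum N a k * (x (k - 1)%nat t - x k t)))
    by (intros k Hk; rewrite <- weight_mul_b by auto; ring).
  rewrite (sumR_tail_sum_by_parts N a (fun k => x k t)), <- sumR_plus.
  transitivity (sumR (fun _ => 0) N); [apply sumR_ext; intros; ring | apply sumR_0].
Qed.

Lemma mass_eq t : 0 < t -> mass t = u0.
Proof.
  intros Ht. rewrite (derive_0_const mass t); auto.
  - unfold mass. rewrite x_0_init, (sumR_ext N _ (fun _ => 0)), sumR_0; [ring|].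
    intros k Hk. rewrite x_S_init; auto. ring.
  - apply (continuity_pt_plus (x 0%nat) (fun t => sumR (fun k => weight k * x k t) N)).
    + apply x_cont_0. lia.
    + apply continuity_pt_sumR. intros k Hk.
      apply (continuity_pt_scal (x k)), x_cont_0. lia.
  - exact derive_mass.
Qed.

Lemma derive_energy L t : 0 < t -> derivable_pt_lim (energy L) t (- dissipation t).
Proof.
  intros Ht.
  assert (H := derivable_pt_lim_plus _ _ t _ _
    (derivable_pt_lim_sqr_shift _ _ _ L (derive_x_0 t Ht))
    (derivable_pt_lim_sumR N (fun k t => weight k * ((x k t - L) * (x k t - L)))
       (fun k => weight k * (2 * (x k t - L) * (b k * (x (k - 1)%nat t - x k t)))) t
       (fun k Hk => derivable_pt_lim_scal _ _ _ _
                      (derivable_pt_lim_sqr_shift _ _ _ L (derive_x_S t Ht k Hk))))).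
  match goal with _ : derivable_pt_lim _ _ ?l |- _ =>
    replace (- dissipation t) with l; [exact H|] end.
  (* With [y_k = (x_k - L)^2]: [2 (x_k - L) (x_{k-1} - x_k) = y_{k-1} - y_k - (x_{k-1} - x_k)^2],
     and the telescoping parts cancel after summation by parts. *)
  set (y := fun k => (x k t - L) * (x k t - L)).
  rewrite (sumR_ext N (fun k => weight k * _)
             (fun k => tail_sum N a k * (y (k - 1)%nat - y k)
                       - tail_sum N a k * ((x (k - 1)%nat t - x k t) * (x (k - 1)%nat t - x k t))))
    by (intros k Hk; rewrite <- weight_mul_b by auto; unfold y; ring).
  rewrite <- sumR_scal.
  rewrite (sumR_ext N (fun j => 2 * (x 0%nat t - L) * _)
             (fun j => - (a j * (y 0%nat - y j))
                       - a j * ((x j t - x 0%nat t) * (x j t - x 0%nat t))))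
    by (intros; unfold y; ring).
  rewrite !sumR_minus, sumR_tail_sum_by_parts.
  unfold dissipation. rewrite (sumR_ext N (fun j => - _) (fun j => -1 * (a j * (y 0%nat - y j))))
    by (intros; ring).
  rewrite sumR_scal. ring.
Qed.

Lemma dissipation_nonneg t : 0 <= dissipation t.
Proof.
  apply Rplus_le_le_0_compat; apply sumR_nonneg; intros k Hk;
    (apply Rmult_le_pos; [auto using tail_sum_nonneg | apply Rle_0_sqr]).
Qed.

Lemma energy_nonneg L t : 0 <= energy L t.
Proof.
  apply Rplus_le_le_0_compat; [apply Rle_0_sqr|].
  apply sumR_nonneg. intros k Hk. apply Rmult_le_pos; [now apply weight_nonneg | apply Rle_0_sqr].
Qed.

Lemma energy_spread L t :
  energy L t + (1 + sumR weight N) * ((x 0%nat t - L) * (x 0%nat t - L)) =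
  sumR (fun k => weight k * ((x k t - x 0%nat t) * (x k t - x 0%nat t))) N
  + 2 * (x 0%nat t - L) * (mass t - L * (1 + sumR weight N)).
Proof.
  set (x0 := x 0%nat t). unfold energy, mass. fold x0.
  rewrite (sumR_ext N (fun k => weight k * ((x k t - L) * (x k t - L)))
             (fun k => weight k * ((x k t - x0) * (x k t - x0))
                       + 2 * (x0 - L) * (weight k * x k t) - (x0 - L) * (x0 + L) * weight k))
    by (intros; ring).
  rewrite sumR_minus, sumR_plus, !sumR_scal. ring.
Qed.

(** Discrete Poincaré inequality. *)
Lemma spread_le_dissipation t :
  sumR (fun k => weight k * ((x k t - x 0%nat t) * (x k t - x 0%nat t))) N
  <= INR N * sumR (fun k => / b k) N * dissipation t.
Proof.
  set (D2 := sumR (fun k => tail_sum N a k *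
                     ((x (k - 1)%nat t - x k t) * (x (k - 1)%nat t - x k t))) N).
  apply Rle_trans with (sumR (fun k => / b k * (INR N * D2)) N).
  - apply sumR_le. intros k Hk. unfold weight. rewrite Rmult_assoc.
    apply Rmult_le_compat_l; [left; apply Rinv_0_lt_compat; auto|].
    apply (tail_sum_sqr_telescope_le N a a_nonneg (fun m => x m t)). lia.
  - rewrite sumR_scal_r.
    assert (0 <= INR N * sumR (fun k => / b k) N).
    { apply Rmult_le_pos; [apply pos_INR|].
      apply sumR_nonneg. intros. left. apply Rinv_0_lt_compat. auto. }
    assert (0 <= sumR (fun j => a j * ((x j t - x 0%nat t) * (x j t - x 0%nat t))) N).
    { apply sumR_nonneg. intros. apply Rmult_le_pos; [auto | apply Rle_0_sqr]. }
    unfold dissipation. fold D2. nra.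
Qed.

(** The conserved mass pins down the only possible common limit. *)
Lemma energy_le_dissipation t :
  0 < t ->
  energy (u0 / (1 + sumR weight N)) t <= INR N * sumR (fun k => / b k) N * dissipation t.
Proof.
  intros Ht. set (Z := 1 + sumR weight N). set (L := u0 / Z).
  assert (HZ : 1 <= Z).
  { assert (0 <= sumR weight N) by (apply sumR_nonneg; apply weight_nonneg). unfold Z. lra. }
  assert (HL : mass t - L * Z = 0) by (rewrite mass_eq by auto; unfold L; field; lra).
  assert (H := energy_spread L t). fold Z in H. rewrite HL, Rmult_0_r, Rplus_0_r in H.
  assert (0 <= (x 0%nat t - L) * (x 0%nat t - L)) by apply Rle_0_sqr.
  assert (H' := spread_le_dissipation t).
  nra.
Qed.

Theorem linear_system_converges :
  forall e, 0 < e -> exists T, 0 < T /\ forall t, T <= t ->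
    Rabs (x 0%nat t - u0 / (1 + sumR weight N)) < e.
Proof.
  intros e He. set (L := u0 / (1 + sumR weight N)).
  set (C := INR N * sumR (fun k => / b k) N + 1).
  assert (HC : 0 < C).
  { assert (0 <= INR N * sumR (fun k => / b k) N); [|unfold C; lra].
    apply Rmult_le_pos; [apply pos_INR|].
    apply sumR_nonneg. intros. left. apply Rinv_0_lt_compat. auto. }
  destruct (lyapunov_vanishes (energy L) dissipation C HC) with (e := e * e)
    as [T [HT HVT]]; try nra.
  - intros t Ht. now apply derive_energy.
  - intros. apply dissipation_nonneg.
  - intros. apply energy_nonneg.
  - intros t Ht. assert (H := energy_le_dissipation t Ht). fold L in H.
    assert (H0 := dissipation_nonneg t). unfold C. nra.
  - exists T. split; auto. intros t Ht. specialize (HVT t Ht).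
    assert (Hsq : (x 0%nat t - L) * (x 0%nat t - L) <= energy L t).
    { unfold energy. assert (0 <= sumR (fun k => weight k * ((x k t - L) * (x k t - L))) N);
        [|lra].
      apply sumR_nonneg. intros k Hk.
      apply Rmult_le_pos; [now apply weight_nonneg | apply Rle_0_sqr]. }
    apply Rabs_def1; nra.
Qed.

End LinearSystem.

(** * The integro-differential equation *)

(** The solution is only constrained on [[0, +oo)]; extending it by the constant [u0] to
    the left makes it continuous on all of [R], which the integral calculus above needs
    at [t = 0]. *)
Definition extend_left (u : R -> R) (u0 : R) (s : R) : R :=
  if Rle_dec 0 s then u s else u0.

Lemma extend_left_pos u u0 s : 0 <= s -> extend_left u u0 s = u s.
Proof. intros Hs. unfold extend_left. now destruct (Rle_dec 0 s). Qed.

Lemma continuity_extend_left (u : R -> R) (u0 : R) :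
  u 0 = u0 ->
  (forall eps, 0 < eps -> exists delta, 0 < delta /\
     forall t, 0 <= t < delta -> Rabs (u t - u0) < eps) ->
  (forall t, 0 < t -> continuity_pt u t) ->
  forall s, continuity_pt (extend_left u u0) s.
Proof.
  intros Hu0 Hright Hcont s eps Heps. simpl. unfold R_dist, extend_left.
  destruct (Rlt_dec s 0) as [Hs|Hs].
  - exists (- s). split; [lra|]. intros y [_ Hy]. apply Rabs_def2 in Hy.
    destruct (Rle_dec 0 y), (Rle_dec 0 s); try lra.
    rewrite Rminus_diag, Rabs_R0. lra.
  - destruct (Req_dec s 0) as [->|Hs0].
    + destruct (Hright eps Heps) as [d [Hd Hd']]. exists d. split; auto.
      intros y [_ Hy]. rewrite Rminus_0_r in Hy. apply Rabs_def2 in Hy.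
      destruct (Rle_dec 0 0); [|lra]. rewrite Hu0.
      destruct (Rle_dec 0 y); [apply Hd'; lra|]. rewrite Rminus_diag, Rabs_R0. lra.
    + destruct (Hcont s ltac:(lra) eps Heps) as [d [Hd Hd']]. simpl in Hd'.
      exists (Rmin d s). split; [apply Rmin_pos; lra|].
      intros y [Hdy Hy]. assert (Hmd := Rmin_l d s). assert (Hms := Rmin_r d s).
      apply Rabs_def2 in Hy as Hy'.
      destruct (Rle_dec 0 y), (Rle_dec 0 s); try lra.
      apply Hd'. split; auto. unfold R_dist. lra.
Qed.

Lemma RiemannInt_kernel_chain N a b (u f : R -> R) t
  (pr : Riemann_integrable (fun s => Kker N a b (t - s) * u s) 0 t) :
  0 < t -> (forall s, 0 <= s <= t -> u s = f s) -> (forall s, continuity_pt f s) ->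
  RiemannInt pr = sumR (fun j => a j * chain b f j t) N.
Proof.
  intros Ht Hfu Hf. rewrite <- RInt_Reals.
  set (F := fun i s => b i * exp (- b i * t) * (exp (b i * s) * f s)).
  assert (HF : forall i s, continuity_pt (F i) s).
  { intros i s. apply (continuity_pt_scal (fun s => exp (b i * s) * f s)).
    now apply continuity_pt_exp_mult. }
  rewrite (RInt_ext _ (fun s => sumR (fun j => a j * sumR (fun i => psi b i j * F i s) j) N)).
  2:{ intros s Hs. rewrite Rmin_left, Rmax_right in Hs by lra. rewrite Hfu by lra.
      unfold Kker, F. rewrite <- sumR_scal_r. apply sumR_ext. intros j Hj.
      unfold Kj. rewrite Rmult_assoc, <- sumR_scal_r. f_equal. apply sumR_ext. intros i Hi.
      replace (- b i * (t - s)) with (- b i * t + b i * s) by ring. rewrite exp_plus. ring. }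
  assert (Hinner : forall j s, continuity_pt (fun s => sumR (fun i => psi b i j * F i s) j) s).
  { intros j s. apply (continuity_pt_sumR j (fun i s => psi b i j * F i s)). intros i _.
    apply (continuity_pt_scal (F i)), HF. }
  rewrite RInt_sumR by (intros j _ s; apply (continuity_pt_scal _ (a j)), Hinner).
  apply sumR_ext. intros j Hj. destruct j as [|j]; [lia|].
  rewrite RInt_scal_R by (apply ex_RInt_continuity, Hinner).
  rewrite RInt_sumR by (intros i _ s; apply (continuity_pt_scal (F i)), HF).
  f_equal. apply sumR_ext. intros i _. unfold F, exp_conv.
  assert (Hexp : ex_RInt (fun s => exp (b i * s) * f s) 0 t)
    by (apply ex_RInt_continuity; intros; now apply continuity_pt_exp_mult).
  rewrite RInt_scal_R, RInt_scal_R; [ring | exact Hexp |].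
  apply (@ex_RInt_scal R_CompleteNormedModule), Hexp.
Qed.

Lemma derive_extend_left_chain N a b (u : R -> R) u0 t
  (pr : Riemann_integrable (fun s => Kker N a b (t - s) * u s) 0 t) :
  0 < t -> (forall s, continuity_pt (extend_left u u0) s) ->
  derivable_pt_lim u t (- sumR a N * u t + RiemannInt pr) ->
  derivable_pt_lim (chain b (extend_left u u0) 0) t
    (sumR (fun j => a j * (chain b (extend_left u u0) j t - chain b (extend_left u u0) 0 t)) N).
Proof.
  intros Ht Hf Hu. set (f := extend_left u u0) in *.
  rewrite (RiemannInt_kernel_chain N a b u f t pr Ht) in Hu; auto.
  2:{ intros s Hs. unfold f. rewrite extend_left_pos; lra. }
  apply is_derive_Reals. apply (is_derive_ext_loc u f).
  - exists (mkposreal t Ht). intros y Hy. change (Rabs (y - t) < t) in Hy.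
    apply Rabs_def2 in Hy. unfold f. rewrite extend_left_pos; lra.
  - apply is_derive_Reals. cbn [chain].
    replace (f t) with (u t) by (unfold f; rewrite extend_left_pos; lra).
    replace (sumR (fun j => a j * (chain b f j t - u t)) N)
      with (- sumR a N * u t + sumR (fun j => a j * chain b f j t) N); [exact Hu|].
    rewrite (sumR_ext N (fun j => a j * (chain b f j t - u t))
               (fun j => a j * chain b f j t - a j * u t)) by (intros; ring).
    rewrite sumR_minus, sumR_scal_r. ring.
Qed.

Theorem mainTheorem5 (N : nat) (a b : nat -> R) (u0 : R) (u : R -> R)
  (Ha : forall j, (1 <= j <= N)%nat -> 0 <= a j)
  (Hb : forall i, (1 <= i <= N)%nat -> 0 < b i)
  (Hdist : forall i k, (1 <= i <= N)%nat -> (1 <= k <= N)%nat -> i <> k -> b i <> b k)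
  (Hu0 : u 0 = u0)
  (Hcont0 : forall eps, 0 < eps -> exists delta, 0 < delta /\
              forall t, 0 <= t < delta -> Rabs (u t - u0) < eps)
  (Hode : forall t, 0 < t ->
     exists pr : Riemann_integrable (fun s => Kker N a b (t - s) * u s) 0 t,
       derivable_pt_lim u t (- sumR a N * u t + RiemannInt pr)) :
  forall eps, 0 < eps -> exists T, forall t, T <= t ->
    Rabs (u t - u0 / Zconst N a b) < eps.
Proof.
  intros eps Heps. set (f := extend_left u u0).
  assert (Hf : forall s, continuity_pt f s).
  { apply continuity_extend_left; auto. intros t Ht.
    destruct (Hode t Ht) as [pr Hu]. apply derivable_continuous_pt. eexists. exact Hu. }
  assert (Hchain : forall k, (S k <= N)%nat -> forall t, derivable_pt_lim (chain b f (S k)) t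
                     (b (S k) * (chain b f k t - chain b f (S k) t))).
  { intros k Hk t. apply derive_chain_S; auto. now apply (pairwise_distinct_le b (S k) N). }
  destruct (linear_system_converges N a b (chain b f) u0 Ha Hb) with (e := eps)
    as [T [HT Hconv]]; auto.
  - unfold f, chain. now rewrite extend_left_pos by lra.
  - intros [|k] Hk; [lia|]. apply chain_S_0.
  - intros [|k] Hk; [apply Hf|].
    apply derivable_continuous_pt. eexists. apply (Hchain k Hk 0).
  - intros t Ht. destruct (Hode t Ht) as [pr Hu].
    now apply (derive_extend_left_chain N a b u u0 t pr).
  - intros t Ht [|k] Hk; [lia|]. replace (S k - 1)%nat with k by lia. apply Hchain. lia.
  - (* [Zconst N a b] unfolds to [1 + sumR (weight N a b) N]. *)
    exists T. intros t Ht. specialize (Hconv t Ht).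
    unfold chain, f in Hconv. rewrite extend_left_pos in Hconv by lra. exact Hconv.
Qed.
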